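(* Let $\mathcal{C}=\{C_1,\ldots,C_m\}$ be a set of node-disjoint chains and let $T$ be a time function for $\mathcal{C}$. Then for every graph $G\in\mathcal{G}^{\mathcal{C},T}$, the set of sources of $\mathcal{C}$ is a zero forcing set of $G$.
   Context: Graphs are directed, self-loops allowed; $E(G)\subseteq V(G)\times V(G)$. A chain is a directed path graph; its start node (no in-neighbor) is its source and its end node (no out-neighbor) its sink; for a node $v$ of a chain that is not its sink, $v+1$ denotes its out-neighbor in the chain. Let $\mathcal{C}=\{C_1,\ldots,C_m\}$ be node-disjoint chains, $C_i$ with $n_i$ nodes, $V=\bigcup_{i=1}^m V(C_i)$, $n=\sum_i n_i$, $\gamma=n-m+1$; the sources of $\mathcal{C}$ are the sources of the $C_i$. A time function is a map $T:V\to\{1,\ldots,\gamma\}$ such that (1) $T(v)=1$ for every source $v$; (2) $T(u)\neq T(v)$ for any two distinct nodes $u,v$ neither of which is a source; (3) $T(v)<T(v+1)$ for every $v$ that is not a sink of its chain. Define $T_{\max}(v)=\gamma$ if $v$ is a sink of some $C_i$, and $T_{\max}(v)=T(v+1)-1$ otherwise. The class $\mathcal{G}^{\mathcal{C},T}$ of $(\mathcal{C},T)$-constructed graphs consists of all graphs $G$ with $V(G)=V$, $\bigcup_i E(C_i)\subseteq E(G)$, and such that for all $u,v\in V$ with $(u,v)\notin\bigcup_i E(C_i)$: if $T_{\max}(u)<T(v)$ then $(u,v)\notin E(G)$. Zero forcing: nodes of $G$ are colored black or white; color-change rule: if a black node $v$ has exactly one white out-neighbor $u$, then $u$ is turned black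 ($v$ forces $u$). Starting from an initial black set $S$ and applying the rule repeatedly until no change is possible yields the derived set $\mathcal{D}(S)$; $S$ is a zero forcing set (ZFS) of $G$ if $\mathcal{D}(S)=V(G)$. *)

From mathcomp Require Import all_boot.
Set Implicit Arguments. Unset Strict Implicit. Unset Printing Implicit Defensive.

Section ZF.
Variable V : finType.

(* A family of chains C = [:: C_1; ...; C_m]; each chain is listed from its
   source to its sink. *)

Definition chain_family (C : seq (seq V)) : Prop :=
  [/\ all (fun c => c != [::]) C, uniq (flatten C) & forall v : V, v \in flatten C].

Definition chain_edge (C : seq (seq V)) (u v : V) : bool :=
  has (fun c => [&& u \in c, (index u c).+1 < size c & v == nth u c (index u c).+1]) C.

Definition is_source (C : seq (seq V)) (v : V) : bool :=
  has (fun c => (v \in c) && (index v c == 0)) C.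

Definition is_sink (C : seq (seq V)) (v : V) : bool :=
  has (fun c => (v \in c) && ((index v c).+1 == size c)) C.

Definition sources (C : seq (seq V)) : {set V} := [set v | is_source C v].

Definition gamma (C : seq (seq V)) : nat := #|V| - size C + 1.

Definition chain_succ (C : seq (seq V)) (v : V) : option V :=
  [pick w | chain_edge C v w].

Definition time_function (C : seq (seq V)) (T : V -> nat) : Prop :=
  [/\ forall v, 1 <= T v <= gamma C,
      forall v, is_source C v -> T v = 1,
      forall u v, u != v -> ~~ is_source C u -> ~~ is_source C v -> T u != T v
    & forall u v, chain_edge C u v -> T u < T v].

Definition Tmax (C : seq (seq V)) (T : V -> nat) (v : V) : nat :=
  if is_sink C v then gamma C
  else match chain_succ C v with Some w => T w - 1 | None => gamma C end.

(* G (given by its edge relation e on V, directed, loops allowed) is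
   (C,T)-constructed *)
Definition constructed (C : seq (seq V)) (T : V -> nat) (e : rel V) : Prop :=
  (forall u v, chain_edge C u v -> e u v) /\
  (forall u v, ~~ chain_edge C u v -> Tmax C T u < T v -> ~~ e u v).

Definition forces (e : rel V) (B : {set V}) (v u : V) : bool :=
  [&& v \in B, u \notin B & [forall w, (e v w && (w \notin B)) == (w == u)]].

Inductive zf_reach (e : rel V) : {set V} -> {set V} -> Prop :=
| zf_refl B : zf_reach e B B
| zf_step B D v u : forces e B v u -> zf_reach e (u |: B) D -> zf_reach e B D.

Definition derived_set (e : rel V) (S D : {set V}) : Prop :=
  zf_reach e S D /\ forall v u, ~~ forces e D v u.

Definition zero_forcing_set (e : rel V) (S : {set V}) : Prop :=
  derived_set e S [set: V].

End ZF.

From mathcomp Require Import all_boot.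
From mathcomp Require Import zify.
Set Implicit Arguments. Unset Strict Implicit. Unset Printing Implicit Defensive.

(* Colour the nodes in increasing order of T.  Let B_t be the set of nodes of
   time < t, so B_2 is the set of sources.  If some v has T v = t >= 2, it is
   not a source and is the only node of time t; its chain predecessor u lies in
   B_t, and every out-neighbour w of u outside its chain has
   T w <= Tmax u = t - 1, so v is the only white out-neighbour of u: u forces v
   and B_t grows into B_(t+1).  After gamma steps every node is black. *)

Section Chains.
Variables (V : finType) (C : seq (seq V)).
Hypothesis uniqC : uniq (flatten C).

Lemma uniq_flatten_mem c : c \in C -> uniq c.
Proof.
elim: C uniqC => [//|c' C' IH] /=; rewrite cat_uniq inE => /and3P[uc' _ uC'].
by case/orP=> [/eqP->|]; last exact: IH.
Qed.

Lemma chain_eq_of_mem c1 c2 x :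
  c1 \in C -> c2 \in C -> x \in c1 -> x \in c2 -> c1 = c2.
Proof.
elim: C uniqC => [//|c C' IH] /=; rewrite cat_uniq => /and3P[_ dis uC'].
rewrite !inE => /orP[/eqP->|h1] /orP[/eqP->|h2] x1 x2 //.
- by case/negP: dis; apply/hasP; exists x => //; apply/flattenP; exists c2.
- by case/negP: dis; apply/hasP; exists x => //; apply/flattenP; exists c1.
- exact: IH.
Qed.

Lemma chain_edge_functional u w1 w2 :
  chain_edge C u w1 -> chain_edge C u w2 -> w1 = w2.
Proof.
move=> /hasP[c1 c1C /and3P[u1 _ /eqP->]] /hasP[c2 c2C /and3P[u2 _ /eqP->]].
by rewrite (chain_eq_of_mem c1C c2C u1 u2).
Qed.

Lemma chain_edge_not_sink u v : chain_edge C u v -> ~~ is_sink C u.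
Proof.
move=> /hasP[c1 c1C /and3P[u1 lt1 _]]; apply/hasPn => c2 c2C.
apply/negP => /andP[u2 /eqP eq2].
by move: lt1; rewrite (chain_eq_of_mem c1C c2C u1 u2) eq2 ltnn.
Qed.

Lemma chain_succ_edge u v : chain_edge C u v -> chain_succ C u = Some v.
Proof.
move=> uv; rewrite /chain_succ; case: pickP => [w uw|/(_ v)]; last by rewrite uv.
by rewrite (chain_edge_functional uw uv).
Qed.

Lemma Tmax_edge (T : V -> nat) u v : chain_edge C u v -> Tmax C T u = T v - 1.
Proof.
by move=> uv; rewrite /Tmax (negbTE (chain_edge_not_sink uv)) (chain_succ_edge uv).
Qed.

End Chains.

Lemma chain_pred_exists (V : finType) (C : seq (seq V)) v :
  chain_family C -> ~~ is_source C v -> exists u, chain_edge C u v.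
Proof.
case=> _ uniqC /(_ v) /flattenP[c cC vc] not_src.
have uc := uniq_flatten_mem uniqC cC.
have iv_gt0 : 0 < index v c.
  rewrite lt0n; apply: contra not_src => /eqP iv0.
  by apply/hasP; exists c; rewrite // vc iv0.
have iv_lt : index v c < size c by rewrite index_mem.
have ivp_lt : (index v c).-1 < size c := leq_ltn_trans (leq_pred _) iv_lt.
set u := nth v c (index v c).-1.
have iu : index u c = (index v c).-1 by rewrite /u index_uniq.
exists u; apply/hasP; exists c => //.
rewrite mem_nth //=.
by rewrite iu prednK // iv_lt /= (set_nth_default v) // nth_index.
Qed.

Lemma forces_setT (V : finType) (e : rel V) v u : ~~ forces e [set: V] v u.
Proof. by rewrite /forces !in_setT. Qed.

Section TimeFunction.
Variables (V : finType) (C : seq (seq V)) (T : V -> nat).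
Hypotheses (famC : chain_family C) (timeT : time_function C T).

Definition time_prefix (t : nat) : {set V} := [set w | T w < t].

Lemma time_nonsource_ge2 v : ~~ is_source C v -> 2 <= T v.
Proof.
case: timeT => Tb _ _ Tinc.
by case/(chain_pred_exists famC) => u /Tinc; have := Tb u; lia.
Qed.

Lemma time_source v : is_source C v = (T v < 2).
Proof.
case: timeT => _ Ts _ _; case: (boolP (is_source C v)) => [/Ts -> //|].
by move/time_nonsource_ge2; lia.
Qed.

Lemma sources_time_prefix : sources C = time_prefix 2.
Proof. by apply/setP => w; rewrite !inE time_source. Qed.

Lemma time_prefix_gamma t : gamma C < t -> time_prefix t = [set: V].
Proof.
case: timeT => Tb _ _ _ lt_gamma.
by apply/setP => w; rewrite !inE; have := Tb w; lia.
Qed.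

Lemma time_prefixS_unused t :
  (forall v, T v != t) -> time_prefix t.+1 = time_prefix t.
Proof.
by move=> unused; apply/setP => w; rewrite !inE ltnS leq_eqVlt (negbTE (unused w)).
Qed.

Lemma time_prefixS t v :
  2 <= t -> T v = t -> time_prefix t.+1 = v |: time_prefix t.
Proof.
case: timeT => _ _ Tinj _ t_ge2 Tv; apply/setP => w; rewrite !inE ltnS leq_eqVlt.
case: (eqVneq w v) => [->|wv]; first by rewrite Tv eqxx.
case: (eqVneq (T w) t) => [Tw|//].
have not_src x : T x = t -> ~~ is_source C x.
  by move=> Tx; rewrite time_source Tx -leqNgt.
by move: (Tinj _ _ wv (not_src _ Tw) (not_src _ Tv)); rewrite Tw Tv eqxx.
Qed.

Variable e : rel V.
Hypothesis constrG : constructed C T e.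

Lemma chain_pred_forces u v :
  chain_edge C u v -> forces e (time_prefix (T v)) u v.
Proof.
have uniqC : uniq (flatten C) by case: famC.
case: constrG timeT => e_chain e_far [_ _ _ Tinc] uv.
apply/and3P; split; first by rewrite inE Tinc.
  by rewrite inE ltnn.
apply/forallP => w; rewrite inE -leqNgt.
case: (eqVneq w v) => [->|wv]; first by rewrite e_chain ?leqnn.
rewrite eqbF_neg; apply/negP => /andP[ew Tw].
case: (boolP (chain_edge C u w)) => [uw|nuw].
  by move: wv; rewrite (chain_edge_functional uniqC uw uv) eqxx.
move: ew; apply/negP/e_far => //.
by rewrite (Tmax_edge uniqC T uv); have := Tinc _ _ uv; lia.
Qed.

Lemma zf_reach_time_prefix t : 2 <= t -> zf_reach e (time_prefix t) [set: V].
Proof.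
have [k] : exists k, gamma C < t + k by exists (gamma C).+1; lia.
elim: k t => [|k IH] t lt_gamma t_ge2.
  by rewrite time_prefix_gamma; [exact: zf_refl | rewrite -(addn0 t)].
case: (pickP (fun v => T v == t)) => [v /eqP Tv|unused].
  have v_not_src : ~~ is_source C v by rewrite time_source Tv -leqNgt.
  have [u uv] := chain_pred_exists famC v_not_src.
  apply: (@zf_step _ _ _ _ u v); first by rewrite -Tv chain_pred_forces.
  by rewrite -(time_prefixS t_ge2 Tv); apply: IH; lia.
by rewrite -time_prefixS_unused => [|w]; [apply: IH; lia | rewrite unused].
Qed.

End TimeFunction.

Theorem theorem2 (V : finType) (C : seq (seq V)) (T : V -> nat) (e : rel V) :
  chain_family C -> time_function C T -> constructed C T e ->
  zero_forcing_set e (sources C).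
Proof.
move=> famC timeT constrG; split; last exact: forces_setT.
rewrite (sources_time_prefix famC timeT).
exact: (zf_reach_time_prefix famC timeT constrG).
Qed.
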